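(* Let $G$ be a finite simple graph with no isolated vertices in which every vertex has even degree, and let $C$ be a connected component of $G$. Then either $C$ contains a triangle, or $C$ contains a path of length five (a path with five edges on six distinct vertices), or $C$ is isomorphic to one of: the cycle $C_4$, the cycle $C_5$, or the complete bipartite graph $K_{2,m}$ with $m\ge 4$ even.
   Context: Graphs are undirected, without loops or multiple edges. *)

From mathcomp Require Import all_boot.
Set Implicit Arguments. Unset Strict Implicit. Unset Printing Implicit Defensive.

Definition simple_graph (T : finType) (e : rel T) : Prop :=
  symmetric e /\ irreflexive e.

Definition deg (T : finType) (e : rel T) (x : T) : nat := #|[set y | e x y]|.

Definition component (T : finType) (e : rel T) (v : T) : {set T} :=
  [set x | connect e v x].

Definition has_triangle (T : finType) (e : rel T) (C : {set T}) : Prop :=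
  exists x y z, [/\ x \in C, y \in C, z \in C & [&& e x y, e y z & e z x]].

Definition has_path5 (T : finType) (e : rel T) (C : {set T}) : Prop :=
  exists (x : T) (s : seq T),
    [/\ size s = 5, uniq (x :: s), path e x s & all (mem C) (x :: s)].

Definition iso_to (T : finType) (e : rel T) (C : {set T}) (U : finType) (r : rel U) : Prop :=
  exists f : U -> T,
    [/\ injective f, (forall x, x \in C <-> exists a, f a = x)
      & forall a b, e (f a) (f b) = r a b].

Definition cycle_rel (n : nat) : rel 'I_n :=
  fun i j => (j == (i.+1 %% n) :> nat) || (i == (j.+1 %% n) :> nat).

Definition K2m_rel (m : nat) : rel ('I_2 + 'I_m) :=
  fun a b => match a, b with
             | inl _, inr _ | inr _, inl _ => true
             | _, _ => false
             end.

Arguments cycle_rel n : clear implicits.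
Arguments K2m_rel m : clear implicits.

From mathcomp Require Import all_boot.
From Stdlib Require Import Classical.
Set Implicit Arguments. Unset Strict Implicit. Unset Printing Implicit Defensive.

(* Walking along paths inside C:
   - from any vertex there is a path with three edges (no triangle);
   - if C has no path with four edges, a path x0 x1 x2 x3 closes into a
     4-cycle that no further vertex can touch, so C is C4;
   - a path x0 ... x4 either closes into a 5-cycle, which is then all of C,
     or x1 and x3 are "hubs" with the common neighbours x0, x2, x4; in that
     case every neighbour of a hub is a common neighbour and the common
     neighbours see only the hubs, so C is K_{2,m} with m the even degree of
     a hub, m >= 3 and hence m >= 4.
   The non-existence of longer paths is what forbids every extra vertex or
   edge; the generic lemmas below recognise a component as the image of an
   injective map closed under neighbours, and the section develops the three
   cases from which claim4 follows by case analysis on the existence of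
   paths with four edges. *)

Lemma other_neighbour (T : finType) (e : rel T) (x a : T) :
  1 < deg e x -> exists2 b, e x b & b <> a.
Proof.
move=> deg2; case: (pickP [pred b | e x b && (b != a)]) => [b /andP[exb /eqP nba]|none].
  by exists b.
suff: deg e x <= 1 by rewrite leqNgt deg2.
rewrite /deg -(cards1 a); apply/subset_leq_card/subsetP => y; rewrite !inE => exy.
by move: (none y) => /=; rewrite exy => /negbFE.
Qed.

Lemma iso_of_closed_image (T U : finType) (e : rel T) (v : T) (r : rel U)
    (f : U -> T) (a0 : U) :
  symmetric e -> injective f -> (forall a, f a \in component e v) ->
  (forall a y, e (f a) y -> y \in codom f) ->
  (forall a b, e (f a) (f b) = r a b) ->
  iso_to e (component e v) r.
Proof.
move=> e_sym f_inj f_comp f_closed f_edge; exists f; split=> // x; split; last by case=> a <-.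
have im_closed : closed e (codom f).
  move=> y z eyz; apply/idP/idP => /codomP[a ya]; first by apply: (f_closed a); rewrite -ya.
  by apply: (f_closed a); rewrite e_sym -ya.
have ca0 : connect e (f a0) v by rewrite (sym_connect_sym e_sym) -inE f_comp.
rewrite inE => cvx; have := closed_connect im_closed (connect_trans ca0 cvx).
by rewrite codom_f => /esym/codomP[a ->]; exists a.
Qed.

Lemma iso_of_seq (T : finType) (e : rel T) (v : T) n (r : rel 'I_n.+1) (s : seq T) :
  symmetric e -> size s = n.+1 -> uniq s -> {subset s <= component e v} ->
  (forall x y, x \in s -> e x y -> y \in s) ->
  (forall i j : 'I_n.+1, e (nth v s i) (nth v s j) = r i j) ->
  iso_to e (component e v) r.
Proof.
move=> e_sym size_s uniq_s s_comp s_closed s_edge.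
apply: (iso_of_closed_image (f := fun i : 'I_n.+1 => nth v s i) ord0) => //.
- by move=> i j /eqP; rewrite nth_uniq ?size_s // => /eqP/val_inj.
- by move=> i; apply/s_comp/mem_nth; rewrite size_s.
- move=> i y /(s_closed _ _ (mem_nth v _)); rewrite size_s => /(_ (ltn_ord i)) ys.
  have iy : index y s < n.+1 by rewrite -size_s index_mem.
  by apply/codomP; exists (Ordinal iy); rewrite /= nth_index.
Qed.

Lemma ord2_cases (i : 'I_2) : i = ord0 \/ i = ord_max.
Proof. by case: i => [[|[|//]] ?]; [left | right]; apply: val_inj. Qed.

Section TriangleFreeComponent.

Variables (T : finType) (e : rel T) (v : T).
Hypothesis e_sym : symmetric e.
Hypothesis e_irr : irreflexive e.
Hypothesis deg_ge2 : forall x, 1 < deg e x.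
Hypothesis deg_even : forall x, ~~ odd (deg e x).
Local Notation C := (component e v).
Hypothesis C_no_triangle : ~ has_triangle e C.
Hypothesis C_no_path5 : ~ has_path5 e C.

Definition simple_path (x : T) (s : seq T) : Prop :=
  [/\ x \in C, path e x s & uniq (x :: s)].

Definition hub_pair (a c b0 b1 b2 : T) : Prop :=
  [/\ a \in C, ~~ e a c, uniq [:: a; c], uniq [:: b0; b1; b2]
    & all (fun b => e a b && e c b) [:: b0; b1; b2]].

Lemma edge_sym x y : e x y -> e y x.
Proof. by rewrite e_sym. Qed.

Lemma edge_in_C x y : x \in C -> e x y -> y \in C.
Proof. by rewrite !inE => cvx exy; apply: connect_trans cvx (connect1 exy). Qed.

Lemma no_triangle x y z : x \in C -> e x y -> e y z -> e x z -> False.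
Proof.
move=> xC exy eyz exz; have yC := edge_in_C xC exy.
apply: C_no_triangle; exists x, y, z.
by rewrite xC yC (edge_in_C yC eyz) exy eyz edge_sym.
Qed.

Lemma no_simple_path5 x s : size s = 5 -> simple_path x s -> False.
Proof.
move=> size_s [xC px uniq_s]; apply: C_no_path5; exists x, s; split=> //.
apply/allP => y /(path_connect px) cxy; rewrite /= inE.
by apply: connect_trans cxy; rewrite -inE.
Qed.

(* Routine bookkeeping on explicit vertices: split hypotheses of the form
   [simple_path x [:: ...]] into edges and inequalities, close edges under
   symmetry and membership in C, and refute loops, triangles in C and
   coincidences of distinct vertices. *)
Ltac split_facts := repeat match goal with
  | H : simple_path _ _ |- _ => case: H => ? ? ?
  | H : hub_pair _ _ _ _ _ |- _ => case: H => ? ? ? ? ?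
  | H : is_true (path _ _ (_ :: _)) |- _ => rewrite /= in H
  | H : is_true (uniq (_ :: _)) |- _ => rewrite /= in H
  | H : is_true (_ && _) |- _ => case/andP: H => ? ?
  | H : is_true (~~ (_ \in _ :: _)) |- _ => rewrite in_cons negb_or in H
  | H : is_true (~~ (_ \in [::])) |- _ => clear H
  | H : is_true (all _ (_ :: _)) |- _ => rewrite /= in H
  | H : is_true (_ != _) |- _ => move/eqP: H => ?
  | H : is_true (~~ e _ _) |- _ => move/negbTE: H => ?
  | H : is_true true |- _ => clear H
  end.

Ltac saturate := repeat match goal with
  | H : is_true (e ?x ?y) |- _ =>
    lazymatch goal with
    | _ : is_true (e y x) |- _ => fail
    | _ => have := edge_sym H; intro end
  | H : is_true (?x \in ?A), E : is_true (e ?x ?y) |- _ =>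
    lazymatch goal with
    | _ : is_true (y \in A) |- _ => fail
    | _ => have := edge_in_C H E; intro end
  end.

Ltac refute := match goal with
  | H : is_true (e ?x ?x) |- _ => by rewrite e_irr in H
  | H : is_true (~~ (e ?x ?y && e ?z ?w)), H1 : is_true (e ?x ?y),
    H2 : is_true (e ?z ?w) |- _ => by rewrite H1 H2 in H
  | xC : is_true (?x \in _), H1 : is_true (e ?x ?y), H2 : is_true (e ?y ?z),
    H3 : is_true (e ?x ?z) |- _ => exact: no_triangle xC H1 H2 H3
  | H : ?b = false, H' : is_true ?b |- _ => by rewrite H' in H
  | H : ?x <> ?x |- _ => exact: H
  end.

Ltac graph_auto := solve [ assumption | saturate; assumption
  | (let H := fresh in intro H; subst; saturate; refute)
  | (exfalso; saturate; refute) ].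

Ltac prove_facts := rewrite /= ?in_cons ?in_nil ?orbF ?negb_or ?andbT;
  repeat (apply/andP; split);
  lazymatch goal with
  | |- is_true (_ != _) => apply/eqP
  | |- is_true (~~ _) => apply/negP
  | _ => idtac end; graph_auto.
Ltac prove_path := split; prove_facts.

(* Minimum degree two and no triangle give a path with three edges through
   any vertex x of C. *)
Lemma path3_exists x : x \in C -> exists x0 x1 x2 x3, simple_path x0 [:: x1; x2; x3].
Proof.
move=> xC; have [a exa nax] := other_neighbour x (deg_ge2 x).
have [b exb nba] := other_neighbour a (deg_ge2 x).
have [c eac ncx] := other_neighbour x (deg_ge2 a).
by exists b, x, a, c; prove_path.
Qed.

(* If C has no path with four edges, a path x0 x1 x2 x3 closes up into a
   4-cycle which is all of C: any further neighbour would extend it. *)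
Lemma cycle4_case x0 x1 x2 x3 :
  (forall y s, size s = 4 -> ~ simple_path y s) -> simple_path x0 [:: x1; x2; x3] ->
  iso_to e C (cycle_rel 4).
Proof.
move=> no_path4 p; split_facts.
have no_ext y z0 z1 z2 z3 : simple_path y [:: z0; z1; z2; z3] -> False.
  by apply: no_path4.
have [y e0y ny1] := other_neighbour x1 (deg_ge2 x0).
have e30 : e x3 x0.
  case: (y =P x3) => [<-|ny3]; first graph_auto.
  by exfalso; apply: (no_ext y x0 x1 x2 x3); prove_path.
apply: (iso_of_seq (s := [:: x0; x1; x2; x3])) => //; first prove_facts.
- by move=> x; rewrite !in_cons in_nil orbF => /or4P[] /eqP ->; graph_auto.
- move=> x z; rewrite !in_cons in_nil orbF => /or4P[] /eqP -> exz;
    apply/negPn/negP; rewrite in_nil orbF !negb_or => nz; split_facts.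
  + by apply: (no_ext z x0 x1 x2 x3); prove_path.
  + by apply: (no_ext z x1 x2 x3 x0); prove_path.
  + by apply: (no_ext z x2 x3 x0 x1); prove_path.
  + by apply: (no_ext z x3 x0 x1 x2); prove_path.
- move=> [[|[|[|[|i]]]] Hi] // [[|[|[|[|j]]]] Hj] //=; rewrite /cycle_rel /=;
    first [apply/negbTE/negP; graph_auto | graph_auto].
Qed.

(* A path x0 ... x4 closed by the edge x4 x0 is a 5-cycle which is all of C,
   since any further neighbour would give a path with five edges. *)
Lemma cycle5_case x0 x1 x2 x3 x4 :
  simple_path x0 [:: x1; x2; x3; x4] -> e x4 x0 -> iso_to e C (cycle_rel 5).
Proof.
move=> p e40; split_facts.
apply: (iso_of_seq (s := [:: x0; x1; x2; x3; x4])) => //; first prove_facts.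
- by move=> x; rewrite !in_cons in_nil orbF => /orP[|/or4P[]] /eqP ->; graph_auto.
- move=> x z; rewrite !in_cons in_nil orbF => /orP[|/or4P[]] /eqP -> exz;
    apply/negPn/negP; rewrite in_nil orbF !negb_or => nz; split_facts.
  + by apply: (@no_simple_path5 z [:: x0; x1; x2; x3; x4]); prove_path.
  + by apply: (@no_simple_path5 z [:: x1; x2; x3; x4; x0]); prove_path.
  + by apply: (@no_simple_path5 z [:: x2; x3; x4; x0; x1]); prove_path.
  + by apply: (@no_simple_path5 z [:: x3; x4; x0; x1; x2]); prove_path.
  + by apply: (@no_simple_path5 z [:: x4; x0; x1; x2; x3]); prove_path.
- move=> [[|[|[|[|[|i]]]]] Hi] // [[|[|[|[|[|j]]]]] Hj] //=; rewrite /cycle_rel /=;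
    first [apply/negbTE/negP; graph_auto | graph_auto].
Qed.

Lemma hub_pair_sym a c b0 b1 b2 : hub_pair a c b0 b1 b2 -> hub_pair c a b0 b1 b2.
Proof. by move=> hp; split_facts; split; prove_facts. Qed.

(* A common neighbour b of two hubs has no neighbour w besides the hubs:
   otherwise w b a b' c b'' is a path with five edges. *)
Lemma common_nbr_nbrs a c b0 b1 b2 b w :
  hub_pair a c b0 b1 b2 -> e a b -> e c b -> e b w -> w = a \/ w = c.
Proof.
move=> hp eab ecb ebw; split_facts.
case: (w =P a) => [|nwa]; [by left | right]; case: (w =P c) => // nwc; exfalso.
have [b' [b'' [pb ecb' ecb'' nb' nb'']]] : exists b' b'',
    [/\ simple_path b' [:: a; b''], e c b', e c b'', b' <> b & b'' <> b].
  case: (b =P b0) => [->|nb0]; first by exists b1, b2; split; try prove_path; graph_auto.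
  case: (b =P b1) => [->|nb1]; first by exists b0, b2; split; try prove_path; graph_auto.
  by exists b0, b1; split; try prove_path; graph_auto.
split_facts.
by apply: (@no_simple_path5 w [:: b; a; b'; c; b'']); prove_path.
Qed.

(* Every neighbour w of a hub is a neighbour of the other hub: otherwise the
   second neighbour u of w extends u w a b0 c b1 to a path with five edges. *)
Lemma hub_nbr_common a c b0 b1 b2 w : hub_pair a c b0 b1 b2 -> e a w -> e c w.
Proof.
move=> hp eaw; have only_hubs := common_nbr_nbrs hp; split_facts.
case ecw: (e c w) => //; exfalso.
have [u ewu nua] := other_neighbour a (deg_ge2 w).
have [/andP[eau ecu]|not_common] := boolP (e a u && e c u).
  by case: (only_hubs _ _ eau ecu (edge_sym ewu)) => ?; subst; graph_auto.
by apply: (@no_simple_path5 u [:: w; a; b0; c; b1]); prove_path.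
Qed.

Definition common_nbrs (a c : T) : {set T} := [set b | e a b && e c b].

Lemma deg_hub a c b0 b1 b2 : hub_pair a c b0 b1 b2 -> deg e a = #|common_nbrs a c|.
Proof.
move=> hp; apply: eq_card => y; rewrite !inE.
by case eay: (e a y); rewrite // (hub_nbr_common hp eay).
Qed.

(* Two hubs make C a complete bipartite graph: the hubs are adjacent exactly
   to their common neighbours, which are adjacent only to the hubs. *)
Lemma hub_pair_iso a c b0 b1 b2 : hub_pair a c b0 b1 b2 ->
  iso_to e C (K2m_rel #|common_nbrs a c|).
Proof.
move=> hp; have a_to_c := hub_nbr_common hp.
have c_to_a := hub_nbr_common (hub_pair_sym hp).
have only_hubs := common_nbr_nbrs hp.
have [aC nac ac_neq _ b_common] := hp.
set B := common_nbrs a c.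
pose f (s : 'I_2 + 'I_#|B|) := match s with
  | inl i => nth a [:: a; c] i | inr j => enum_val j end.
have fB (j : 'I_#|B|) : e a (enum_val j) && e c (enum_val j).
  by have := enum_valP j; rewrite inE.
have B_codom y : y \in B -> y \in codom f.
  by move=> yB; apply/codomP; exists (inr (enum_rank_in yB y)); rewrite /= enum_rankK_in.
have a_codom : a \in codom f by apply/codomP; exists (inl ord0).
have c_codom : c \in codom f by apply/codomP; exists (inl ord_max).
have /andP[eab0 ecb0] : e a b0 && e c b0 by apply: (allP b_common); rewrite inE eqxx.
have cC : c \in C := edge_in_C (edge_in_C aC eab0) (edge_sym ecb0).
have nca : e c a = false by rewrite e_sym; apply: negbTE.
apply: (@iso_of_closed_image _ _ _ _ _ f (inl ord0)) => //.
- move=> [i|j] [i'|j'] /=.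
  + case: (ord2_cases i) (ord2_cases i') => -> [] -> //= ac;
      by move: ac_neq; rewrite /= inE ac eqxx.
  + by case: (ord2_cases i) => -> /= ac; move: (fB j'); rewrite -ac e_irr ?andbF.
  + by case: (ord2_cases i') => -> /= ac; move: (fB j); rewrite ac e_irr ?andbF.
  + by move/enum_val_inj ->.
- move=> [i|j] //=; first by case: (ord2_cases i) => -> /=.
  by apply: edge_in_C aC _; case/andP: (fB j).
- move=> [i|j] y /= ey; last first.
    by case/andP: (fB j) => eaj ecj; case: (only_hubs _ _ eaj ecj ey) => ->.
  apply: B_codom; rewrite inE.
  by case: (ord2_cases i) ey => -> /= ey; rewrite ey ?(a_to_c _ ey) ?(c_to_a _ ey).
- move=> [i|j] [i'|j'] /=.
  + by case: (ord2_cases i) (ord2_cases i') => -> [] -> /=; rewrite ?e_irr ?nca ?(negbTE nac).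
  + by case: (ord2_cases i) => -> /=; case/andP: (fB j').
  + by case: (ord2_cases i') => -> /=; rewrite e_sym; case/andP: (fB j).
  + apply/negbTE/negP => ejj'; case/andP: (fB j) => eaj _; case/andP: (fB j') => eaj' _.
    exact: no_triangle aC eaj ejj' eaj'.
Qed.

(* So C is K_{2,m} where m is the degree of a hub: m is even and at least 3
   (it counts b0, b1, b2), hence at least 4. *)
Lemma K2m_case a c b0 b1 b2 : hub_pair a c b0 b1 b2 ->
  exists m, [/\ 4 <= m, ~~ odd m & iso_to e C (K2m_rel m)].
Proof.
move=> hp; have [_ _ _ uniq_b b_common] := hp.
have m_ge3 : 3 <= #|common_nbrs a c|.
  rewrite -[3]/(size [:: b0; b1; b2]) -(card_uniqP uniq_b).
  by apply/subset_leq_card/subsetP => y yb; rewrite inE; apply: (allP b_common).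
have m_even := deg_even a; rewrite (deg_hub hp) in m_even.
exists #|common_nbrs a c|; split; last exact: hub_pair_iso hp.
- by move: m_even m_ge3; case: #|_| => [|[|[|[|]]]].
- exact: m_even.
Qed.

(* A path x0 ... x4 either closes into a 5-cycle (x0 ~ x4) or, since x0 and
   x4 have their second neighbours among the path, x1 and x3 are hubs with
   the common neighbours x0, x2, x4. *)
Lemma path4_case x0 x1 x2 x3 x4 : simple_path x0 [:: x1; x2; x3; x4] ->
  iso_to e C (cycle_rel 5) \/ exists m, [/\ 4 <= m, ~~ odd m & iso_to e C (K2m_rel m)].
Proof.
move=> p; have closes_C5 := cycle5_case p; split_facts.
have [y e0y ny1] := other_neighbour x1 (deg_ge2 x0).
have y34 : y = x3 \/ y = x4.
  case: (y =P x3) => [|ny3]; [by left | right]; case: (y =P x4) => // ny4; exfalso.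
  by apply: (@no_simple_path5 y [:: x0; x1; x2; x3; x4]); prove_path.
have [e04|/negbTE n04] := boolP (e x0 x4); [left | right].
  by apply: closes_C5; graph_auto.
have e03 : e x0 x3 by case: y34 => ?; subst; graph_auto.
have [z e4z nz3] := other_neighbour x3 (deg_ge2 x4).
have e41 : e x4 x1.
  case: (z =P x1) => [<-//|nz1]; exfalso.
  by apply: (@no_simple_path5 x0 [:: x1; x2; x3; x4; z]); prove_path.
by apply: (@K2m_case x1 x3 x0 x2 x4); split; prove_facts.
Qed.

End TriangleFreeComponent.

Theorem claim4 (T : finType) (e : rel T) (v : T) :
  simple_graph e ->
  (forall x : T, 0 < deg e x) ->
  (forall x : T, ~~ odd (deg e x)) ->
  has_triangle e (component e v) \/
  has_path5 e (component e v) \/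
  iso_to e (component e v) (cycle_rel 4) \/
  iso_to e (component e v) (cycle_rel 5) \/
  (exists m : nat, [/\ 4 <= m, ~~ odd m & iso_to e (component e v) (K2m_rel m)]).
Proof.
move=> [e_sym e_irr] deg_pos deg_even.
have deg_ge2 x : 1 < deg e x.
  by move: (deg_pos x) (deg_even x); case: (deg e x) => [|[|]].
have [tri|no_tri] := classic (has_triangle e (component e v)); first by left.
have [p5|no_p5] := classic (has_path5 e (component e v)); first by right; left.
right; right.
have vC : v \in component e v by rewrite inE.
have [x0 [x1 [x2 [x3 p3]]]] := path3_exists e_sym e_irr deg_ge2 no_tri vC.
have [[y [s [size_s p4]]]|no_p4] := classic (exists y s, size s = 4 /\ simple_path e v y s).
- right; case: s size_s p4 => [|y1 [|y2 [|y3 [|y4 []]]]] // _ p4.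
  exact: path4_case e_sym e_irr deg_ge2 deg_even no_tri no_p5 _ _ _ _ _ p4.
- left; apply: (cycle4_case e_sym e_irr deg_ge2 no_tri _ p3) => y s size_s p4.
  by apply: no_p4; exists y, s.
Qed.
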